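(* Let $(V,g)$ be a Euclidean vector space of dimension $4$. Let $R$ be an algebraic curvature tensor on $V$ and $\mathring{R}$ its induced curvature operator of the second kind. (1) If $\mathring{R}\in\mathcal{C}(\alpha,1)$ with $1\le\alpha\le3$, or $\mathring{R}\in\mathcal{C}(\alpha,9\alpha^{-1}-2)$ with $3\le\alpha<9$, then $R$ has nonnegative isotropic curvature. (2) If $\mathring{R}\in\mathring{\mathcal{C}}(\alpha,1)$ with $1\le\alpha\le3$, or $\mathring{R}\in\mathring{\mathcal{C}}(\alpha,9\alpha^{-1}-2)$ with $3\le\alpha<9$, then $R$ has positive isotropic curvature.
   Context: $S^2_0(V)$ is the space of traceless symmetric two-tensors (dimension $N=9$). An algebraic curvature tensor is $R\in S^2(\wedge^2V)$ satisfying the first Bianchi identity. $\mathring{R}=\pi\circ\overline{R}:S^2_0(V)\to S^2_0(V)$ with $\overline{R}(h)_{ij}=\sum_{k,l}R_{iklj}h_{kl}$ and $\pi$ the projection onto traceless tensors. For a symmetric operator with eigenvalues $\lambda_1\le\cdots\le\lambda_N$ and average $\bar\lambda$, write $\lambda_1+\cdots+\lambda_\alpha:=\lambda_1+\cdots+\lambda_{[\alpha]}+(\alpha-[\alpha])\lambda_{[\alpha]+1}$; $\mathcal{C}(\alpha,\theta)$ ($\theta>-1$) is the cone of symmetric operators on $S^2_0(V)$ with $\alpha^{-1}(\lambda_1+\cdots+\lambda_\alpha)\ge-\theta\bar\lambda$, and $\mathring{\mathcal{C}}(\alpha,\theta)$ its interior. $R$ has nonnegative (resp. positive) isotropic curvature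 if $R_{1313}+R_{1414}+R_{2323}+R_{2424}-2R_{1234}\ge0$ (resp. $>0$) for every orthonormal four-frame $\{e_1,e_2,e_3,e_4\}$, where $R_{ijkl}=R(e_i,e_j,e_k,e_l)$. *)

From HB Require Import structures.
From mathcomp Require Import all_boot all_order all_algebra.
From mathcomp Require Import reals.
Set Implicit Arguments. Unset Strict Implicit. Unset Printing Implicit Defensive.
Import Order.TTheory GRing.Theory Num.Theory.
Local Open Scope ring_scope.

Section Defs.
Variable R : realType.

(* V = R^4 with its standard inner product; a 4-tensor is given by its
   components R_{ijkl} in the standard orthonormal basis (indices 0..3). *)
Definition tensor4 := 'I_4 -> 'I_4 -> 'I_4 -> 'I_4 -> R.

Definition is_alg_curv (Rm : tensor4) : Prop :=
  [/\ forall i j k l, Rm i j k l = - Rm j i k l,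
      forall i j k l, Rm i j k l = - Rm i j l k,
      forall i j k l, Rm i j k l = Rm k l i j
    & forall i j k l, Rm i j k l + Rm j k i l + Rm k i j l = 0].

Definition Reval (Rm : tensor4) (x y z w : 'I_4 -> R) : R :=
  \sum_a \sum_b \sum_c \sum_d Rm a b c d * x a * y b * z c * w d.

Definition vdot (x y : 'I_4 -> R) : R := \sum_k x k * y k.

(* orthonormal four-frame {e_1,...,e_4} = {e 0, ..., e 3} *)
Definition orthonormal_frame (e : 'I_4 -> 'I_4 -> R) : Prop :=
  forall i j, vdot (e i) (e j) = (i == j)%:R.

Definition iso_curv (Rm : tensor4) (e : 'I_4 -> 'I_4 -> R) : R :=
  let e1 := e (inord 0) in let e2 := e (inord 1) in
  let e3 := e (inord 2) in let e4 := e (inord 3) in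
  Reval Rm e1 e3 e1 e3 + Reval Rm e1 e4 e1 e4 + Reval Rm e2 e3 e2 e3
  + Reval Rm e2 e4 e2 e4 - 2 * Reval Rm e1 e2 e3 e4.

Definition nonneg_iso_curv (Rm : tensor4) : Prop :=
  forall e, orthonormal_frame e -> 0 <= iso_curv Rm e.

Definition pos_iso_curv (Rm : tensor4) : Prop :=
  forall e, orthonormal_frame e -> 0 < iso_curv Rm e.

(* symmetric two-tensors on V are 4x4 matrices; induced inner product *)
Definition mdot (A B : 'M[R]_4) : R := \sum_i \sum_j A i j * B i j.

Definition Rbar (Rm : tensor4) (h : 'M[R]_4) : 'M[R]_4 :=
  \matrix_(i, j) \sum_k \sum_l Rm i k l j * h k l.

Definition proj0 (h : 'M[R]_4) : 'M[R]_4 := h - (\tr h / 4%:R) *: 1%:M.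

Definition is_onb_S20 (b : 'I_9 -> 'M[R]_4) : Prop :=
  [/\ forall a, (b a)^T = b a,
      forall a, \tr (b a) = 0
    & forall a c, mdot (b a) (b c) = (a == c)%:R].

(* matrix of the curvature operator of the second kind R° = π ∘ \overline{R}
   on S^2_0(V) in the orthonormal basis b *)
Definition curv2_mx (Rm : tensor4) (b : 'I_9 -> 'M[R]_4) : 'M[R]_9 :=
  \matrix_(a, c) mdot (b a) (proj0 (Rbar Rm (b c))).

(* λ_1 + ... + λ_α := λ_1+...+λ_[α] + (α-[α]) λ_{[α]+1}
   (lam is the 0-indexed nondecreasing list of eigenvalues) *)
Definition psum (lam : seq R) (alpha : R) : R :=
  let k := `|Num.floor alpha|%N in
  \sum_(i < k) lam`_i + (alpha - k%:R) * lam`_k.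

(* eigenvalues λ_1 <= ... <= λ_9 of a (symmetric) operator given by its
   matrix A in an orthonormal basis: the roots of its characteristic polynomial
   with multiplicity, sorted. *)
Definition eigenvalues_of (A : 'M[R]_9) (lam : seq R) : Prop :=
  [/\ size lam = 9%N, sorted <=%R lam
    & char_poly A = \prod_(x <- lam) ('X - x%:P)].

Definition in_cone (A : 'M[R]_9) (alpha theta : R) : Prop :=
  exists lam, eigenvalues_of A lam /\
    alpha^-1 * psum lam alpha >= - theta * ((\sum_(x <- lam) x) / 9%:R).

(* interior of C(α,θ) in the space of symmetric operators on S^2_0(V)
   (identified, via the orthonormal basis, with symmetric 9x9 matrices) *)
Definition in_cone_interior (A : 'M[R]_9) (alpha theta : R) : Prop :=
  exists2 eps : R, 0 < eps &
    forall B : 'M[R]_9, B^T = B ->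
      (forall a c, `|B a c - A a c| < eps) -> in_cone B alpha theta.

End Defs.

From HB Require Import structures.
From mathcomp Require Import all_boot all_order all_algebra.
From mathcomp Require Import reals.
From mathcomp Require Import complex spectral sesquilinear.
From mathcomp Require Import ring lra.
Set Implicit Arguments. Unset Strict Implicit. Unset Printing Implicit Defensive.
Import Order.TTheory GRing.Theory Num.Theory.
Local Open Scope ring_scope.

(* Fix an orthonormal frame e_1, ..., e_4.  For the three splittings {p,q}|{r,s}
   of {1,2,3,4}, the tensors (e_p.e_q +- e_r.e_s)/2 and
   (e_p.e_p + e_q.e_q - e_r.e_r - e_s.e_s)/2 (symmetric products) form an
   orthonormal basis phi_1, ..., phi_9 of S^2_0(V), and the symmetries of R give
     3 (Q phi_1 + Q phi_4 + Q phi_7) + (Q phi_1 + ... + Q phi_9) = 9/2 I(e),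
   where Q phi = <R°(phi), phi> and I(e) is the isotropic curvature of the frame.
   By Schur's theorem the diagonal of R° in any orthonormal basis is a doubly
   stochastic average of its eigenvalues, hence
   lambda_1 + ... + lambda_alpha <= sum_i w_i Q phi_i for weights 0 <= w_i <= 1
   of total mass alpha.  With w = alpha/3 on phi_1, phi_4, phi_7 and 0 elsewhere
   (alpha <= 3), resp. w = 1 there and (alpha - 3)/6 elsewhere (alpha >= 3), the
   cone condition turns into I(e) >= 0.  In the interior of the cone one may
   replace R° by R° - delta id for a small delta > 0, which gives I(e) >= 4 delta. *)

Section Majorization.
Variable R : realType.

Lemma psum_le_weighted n (lam : seq R) (d c : 'I_n -> R) (al : R) :
  size lam = n -> sorted <=%R lam -> perm_eq lam [seq d k | k <- enum 'I_n] ->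
  (forall k, 0 <= c k <= 1) -> \sum_k c k = al -> 0 <= al < n%:R ->
  psum lam al <= \sum_k c k * d k.
Proof.
move=> sz so pe hc sc /andP[al0 aln].
have le_nth i j : (i <= j < n)%N -> lam`_i <= lam`_j.
  case/andP=> ij jn; apply: (sorted_leq_nth le_trans) => //; rewrite inE sz //.
  exact: leq_ltn_trans ij jn.
rewrite /psum; set k0 := `|Num.floor al|%N; set t := lam`_k0.
have fl0 : 0 <= Num.floor al by rewrite floor_ge_int.
have k0E : (k0%:R : R) = (Num.floor al)%:~R by rewrite -[in RHS](gez0_abs fl0) pmulrn.
have k0n : (k0 < n)%N.
  by rewrite -(ltr_nat R) k0E (le_lt_trans (floor_le _)).
(* t is the ([alpha]+1)-st eigenvalue; c_k (d_k - t) >= min (d_k - t) 0, and these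
   minima add up to the sum of lam_i - t over the [alpha] smallest eigenvalues. *)
pose g x := Num.min (x - t) 0.
have lower : \sum_k g (d k) + al * t <= \sum_k c k * d k.
  have -> : \sum_k c k * d k = \sum_k c k * (d k - t) + al * t.
    by rewrite -sc mulr_suml -big_split; apply: eq_bigr => k _ /=; ring.
  rewrite lerD2r; apply: ler_sum => k _; have /andP[c0 c1] := hc k.
  rewrite /g; case: (leP (d k - t) 0) => h; first by nra.
  exact: mulr_ge0 c0 (ltW h).
have sum_g : \sum_k g (d k) = \sum_(i < k0) lam`_i - k0%:R * t.
  have -> : \sum_k g (d k) = \sum_(i < n) g lam`_i.
    transitivity (\sum_(x <- lam) g x); last by rewrite (big_nth 0) sz big_mkord.
    by rewrite (perm_big _ pe) big_map big_enum.
  rewrite -(subnKC (ltnW k0n)) big_split_ord /= [X in _ + X]big1 ?addr0; last first.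
    move=> i _; apply: min_r; rewrite subr_ge0 le_nth // leq_addr /=.
    by rewrite -{2}(subnKC (ltnW k0n)) ltn_add2l.
  rewrite mulr_natl -[k0 in _ *+ k0]card_ord -sumr_const -sumrB.
  apply: eq_bigr => i _; apply: min_l.
  by rewrite subr_le0 le_nth // (ltnW (ltn_ord i)).
have k0al : (k0%:R : R) <= al by rewrite k0E floor_le.
rewrite sum_g in lower; lra.
Qed.

End Majorization.

Lemma char_poly_conj (F : fieldType) n (P D : 'M[F]_n) : P \in unitmx ->
  char_poly (invmx P *m D *m P) = char_poly D.
Proof.
move=> Pu; pose Pi := map_mx polyC (invmx P); pose Pp := map_mx polyC P.
have PiPp : Pi *m Pp = 1%:M by rewrite -map_mxM mulVmx // map_mx1.
have cE : char_poly_mx (invmx P *m D *m P) = Pi *m char_poly_mx D *m Pp.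
  rewrite /char_poly_mx !map_mxM mulmxBr mulmxBl -/Pi -/Pp.
  by rewrite mul_mx_scalar -scalemxAl PiPp -mulmxA scalemx1.
rewrite /char_poly cE !det_mulmx mulrC mulrA -det_mulmx.
by rewrite (mulmx1C PiPp) det1 mul1r.
Qed.

Section Eigenvalues.
Variables (F : fieldType) (n : nat) (A : 'M[F]_n) (lam : seq F).
Hypothesis char_polyA : char_poly A = \prod_(x <- lam) ('X - x%:P).

Lemma size_eigenvalues : size lam = n.
Proof.
have := congr1 (fun p : {poly F} => size p) char_polyA.
by rewrite size_char_poly size_prod_XsubC => -[].
Qed.

Lemma sum_eigenvalues : \sum_(x <- lam) x = \tr A.
Proof.
have [n0|n_gt0] := posnP n.
  rewrite (size0nil (etrans size_eigenvalues n0)) big_nil; apply/esym/big1 => i _.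
  by move: (ltn_ord i); rewrite [in X in (_ < X)%N]n0.
apply: oppr_inj; rewrite -char_poly_trace // char_polyA -size_eigenvalues.
by rewrite coefPn_prod_XsubC // size_eigenvalues -lt0n.
Qed.

End Eigenvalues.

Section Spectral.
Variable R : realType.
Local Open Scope sesquilinear_scope.
Local Notation toC := (real_complex R).

Definition doubly_stochastic n (S : 'M[R]_n) :=
  [/\ forall k i, 0 <= S k i, forall k, \sum_i S k i = 1 & forall i, \sum_k S k i = 1].

Lemma unitary_doubly_stochastic n (V : 'M[R[i]]_n) : V \is unitarymx ->
  doubly_stochastic (\matrix_(k, i) complex.Re ((V k i)^* * V k i)).
Proof.
move=> Vu; have VTu : V^t* \is unitarymx by rewrite trmxC_unitary.
have nE k i : (V k i)^* * V k i = toC (complex.Re ((V k i)^* * V k i)).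
  by rewrite RRe_real // ger0_real // mulrC mul_conjC_ge0.
split=> [k i|k|i]; rewrite ?mxE.
- by rewrite -ler0c -nE mulrC mul_conjC_ge0.
- apply: complexI; rewrite rmorph_sum rmorph1.
  have /unitarymxP/matrixP/(_ k k) := Vu; rewrite !mxE eqxx mulr1n => <-.
  by apply: eq_bigr => i _; rewrite !mxE [RHS]mulrC nE.
- apply: complexI; rewrite rmorph_sum rmorph1.
  have /unitarymxP/matrixP/(_ i i) := VTu; rewrite trmxCK !mxE eqxx mulr1n => <-.
  by apply: eq_bigr => k _; rewrite !mxE nE.
Qed.

Lemma real_sym_spectral n (A : 'M[R]_n) (lam : seq R) : A^T = A ->
  char_poly A = \prod_(x <- lam) ('X - x%:P) ->
  exists2 P : 'M[R[i]]_n, P \is unitarymx &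
  exists2 d : 'I_n -> R, perm_eq lam [seq d k | k <- enum 'I_n] &
    map_mx toC A = invmx P *m diag_mx (\row_k toC (d k)) *m P.
Proof.
move=> AT cA; set AC := map_mx toC A.
have realC x : toC x \is Num.real by apply/complex_realP; exists x.
have ACreal : AC \is a realmx by apply/mxOverP => i j; rewrite mxE realC.
have ACsym : AC \is symmetricmx.
  by apply/is_hermitianmxP; rewrite expr0 scale1r map_mx_id // map_trmx AT.
have ACh : AC \is hermsymmx := realsym_hermsym ACsym ACreal.
have ACE : AC = invmx (spectralmx AC) *m diag_mx (spectral_diag AC) *m spectralmx AC.
  by apply/orthomx_spectralP; exact: symmetric_normalmx ACsym ACreal.
pose d k := complex.Re (spectral_diag AC 0 k).
have ddE : spectral_diag AC = \row_k toC (d k).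
  apply/rowP => k; rewrite mxE /d RRe_real //.
  exact: mxOverP (hermitian_spectral_diag_real ACh) 0 k.
exists (spectralmx AC); first exact: spectral_unitarymx.
exists d; last by rewrite -ddE.
apply: (@perm_map_inj _ _ toC (@complexI R)); rewrite -map_comp; apply: prod_XsubC_eq.
rewrite big_map [RHS]big_map big_enum /=.
have -> : \prod_(x <- lam) ('X - (toC x)%:P) = map_poly toC (char_poly A).
  by rewrite cA rmorph_prod; apply: eq_bigr => x _; rewrite /= map_polyXsubC.
rewrite map_char_poly -/AC ACE char_poly_conj ?spectral_unit //.
rewrite char_poly_trig ?diag_mx_is_trig // ddE.
by apply: eq_bigr => k _; rewrite !mxE eqxx mulr1n.
Qed.

Lemma diag_conj_doubly_stochastic n (A M : 'M[R]_n) (lam : seq R) : A^T = A ->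
  char_poly A = \prod_(x <- lam) ('X - x%:P) -> M *m M^T = 1%:M ->
  exists2 d : 'I_n -> R, perm_eq lam [seq d k | k <- enum 'I_n] &
  exists2 S : 'M[R]_n, doubly_stochastic S &
    forall i, (M *m A *m M^T) i i = \sum_k S k i * d k.
Proof.
move=> AT cA MMT; have [P Pu [d pe AE]] := real_sym_spectral AT cA.
exists d => //; set MC := map_mx toC M.
have conj_toC x : (toC x)^* = toC x by apply/CrealP/complex_realP; exists x.
have MCt : MC^t* = MC^T by apply/matrixP => i j; rewrite !mxE conj_toC.
have MCTu : MC^T \is unitarymx.
  by rewrite trmx_unitary; apply/unitarymxP; rewrite MCt map_trmx -map_mxM MMT map_mx1.
set V := P *m MC^T; have Vu : V \is unitarymx := mul_unitarymx Pu MCTu.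
exists (\matrix_(k, i) complex.Re ((V k i)^* * V k i)).
  exact: unitary_doubly_stochastic.
have VtE : MC *m P^t* = V^t*.
  rewrite /V trmx_mul map_mxM; congr (_ *m _).
  by apply/matrixP => i j; rewrite !mxE; exact/esym/conj_toC.
move=> i; apply: complexI; rewrite rmorph_sum.
have -> : toC ((M *m A *m M^T) i i) = (MC *m map_mx toC A *m MC^T) i i.
  by rewrite map_trmx -!map_mxM [RHS]mxE.
rewrite AE invmx_unitary // !mulmxA VtE -!mulmxA -/V mul_diag_mx mxE.
apply: eq_bigr => k _; rewrite !mxE rmorphM /= RRe_real; first by ring.
by rewrite ger0_real // mulrC mul_conjC_ge0.
Qed.

Lemma psum_le_diag_conj n (A M : 'M[R]_n) (lam : seq R) (w : 'I_n -> R) (al : R) :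
  A^T = A -> sorted <=%R lam -> char_poly A = \prod_(x <- lam) ('X - x%:P) ->
  M *m M^T = 1%:M -> (forall i, 0 <= w i <= 1) -> \sum_i w i = al ->
  0 <= al < n%:R -> psum lam al <= \sum_i w i * (M *m A *m M^T) i i.
Proof.
move=> AT so cA MMT hw sw hal.
have [d pe [S [S0 Srow Scol] diagE]] := diag_conj_doubly_stochastic AT cA MMT.
pose c k := \sum_i w i * S k i.
have hc k : 0 <= c k <= 1.
  apply/andP; split.
    by apply: sumr_ge0 => i _; case/andP: (hw i) => w0 _; exact: mulr_ge0.
  rewrite -(Srow k); apply: ler_sum => i _; case/andP: (hw i) => w0 w1.
  by rewrite ler_piMl.
have sc : \sum_k c k = al.
  by rewrite /c exchange_big -sw; apply: eq_bigr => i _; rewrite -mulr_sumr Scol mulr1.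
suff -> : \sum_i w i * (M *m A *m M^T) i i = \sum_k c k * d k.
  exact: psum_le_weighted (size_eigenvalues cA) so pe hc sc hal.
under [RHS]eq_bigr do rewrite /c mulr_suml.
rewrite exchange_big; apply: eq_bigr => i _; rewrite diagE mulr_sumr.
by apply: eq_bigr => k _; rewrite mulrA.
Qed.

Lemma in_cone_diag_bound (A M : 'M[R]_9) (al th : R) (w : 'I_9 -> R) :
  A^T = A -> M *m M^T = 1%:M -> in_cone A al th ->
  (forall i, 0 <= w i <= 1) -> \sum_i w i = al -> 0 < al < 9 ->
  - (al * th / 9) * \sum_i (M *m A *m M^T) i i <= \sum_i w i * (M *m A *m M^T) i i.
Proof.
move=> AT MMT [lam [[_ so cA] cone]] hw sw /andP[al0 al9].
have hal : 0 <= al < 9%:R by rewrite (ltW al0).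
have := psum_le_diag_conj AT so cA MMT hw sw hal.
have -> : \sum_i (M *m A *m M^T) i i = \sum_(x <- lam) x.
  rewrite (sum_eigenvalues cA) -[LHS]/(\tr (M *m A *m M^T)) mxtrace_mulC mulmxA.
  by rewrite (mulmx1C MMT) mul1mx.
have := ler_wpM2l (ltW al0) cone; rewrite [X in _ <= X]mulrA mulfV ?gt_eqF // mul1r.
lra.
Qed.

End Spectral.

Section CurvatureForm.
Variable R : realType.
Implicit Types (X Y : 'M[R]_4) (K : tensor4 R).

Lemma mdotC X Y : mdot X Y = mdot Y X.
Proof. by apply: eq_bigr => i _; apply: eq_bigr => j _; rewrite mulrC. Qed.

Lemma mdotDl X1 X2 Y : mdot (X1 + X2) Y = mdot X1 Y + mdot X2 Y.
Proof.
rewrite /mdot -big_split; apply: eq_bigr => i _.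
by rewrite -big_split; apply: eq_bigr => j _; rewrite mxE mulrDl.
Qed.

Lemma mdotZl c X Y : mdot (c *: X) Y = c * mdot X Y.
Proof.
rewrite /mdot mulr_sumr; apply: eq_bigr => i _.
by rewrite mulr_sumr; apply: eq_bigr => j _; rewrite mxE mulrA.
Qed.

Lemma mdot_suml (I : finType) (F : I -> 'M[R]_4) Y :
  mdot (\sum_a F a) Y = \sum_a mdot (F a) Y.
Proof.
rewrite /mdot; transitivity (\sum_i \sum_j \sum_a F a i j * Y i j).
  by apply: eq_bigr => i _; apply: eq_bigr => j _; rewrite summxE mulr_suml.
by under eq_bigr => i _ do rewrite exchange_big; rewrite exchange_big.
Qed.

Lemma mdotDr X Y1 Y2 : mdot X (Y1 + Y2) = mdot X Y1 + mdot X Y2.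
Proof. by rewrite mdotC mdotDl !(mdotC X). Qed.

Lemma mdotZr c X Y : mdot X (c *: Y) = c * mdot X Y.
Proof. by rewrite mdotC mdotZl mdotC. Qed.

Lemma mdot_sumr (I : finType) (F : I -> 'M[R]_4) X :
  mdot X (\sum_a F a) = \sum_a mdot X (F a).
Proof. by rewrite mdotC mdot_suml; apply: eq_bigr => a _; rewrite mdotC. Qed.

Lemma mdotE X Y : mdot X Y = \tr (X *m Y^T).
Proof. by apply: eq_bigr => i _; rewrite mxE; apply: eq_bigr => j _; rewrite mxE. Qed.

Lemma mdot1r X : mdot X 1%:M = \tr X.
Proof. by rewrite mdotE trmx1 mulmx1. Qed.

Lemma sum_delta_mx (F : 'I_4 -> 'I_4 -> R) p q :
  \sum_i \sum_j delta_mx p q i j * F i j = F p q.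
Proof.
rewrite (bigD1 p) //= (bigD1 q) //= mxE !eqxx mul1r.
have -> : \sum_(j < 4 | j != q) delta_mx p q p j * F p j = 0.
  by apply: big1 => j /negPf jq; rewrite mxE jq andbF mul0r.
have -> : \sum_(i < 4 | i != p) \sum_j delta_mx p q i j * F i j = 0.
  by apply: big1 => i /negPf ip; apply: big1 => j _; rewrite mxE ip mul0r.
by rewrite !addr0.
Qed.

Lemma mdotNl X Y : mdot (- X) Y = - mdot X Y.
Proof. by rewrite -scaleN1r mdotZl mulN1r. Qed.

Lemma mdotNr X Y : mdot X (- Y) = - mdot X Y.
Proof. by rewrite mdotC mdotNl mdotC. Qed.

Lemma mdot_deltal p q Y : mdot (delta_mx p q) Y = Y p q.
Proof. exact: sum_delta_mx. Qed.

Lemma RbarD K X Y : Rbar K (X + Y) = Rbar K X + Rbar K Y.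
Proof.
apply/matrixP => i j; rewrite !mxE -big_split; apply: eq_bigr => k _.
by rewrite -big_split; apply: eq_bigr => l _; rewrite mxE mulrDr.
Qed.

Lemma RbarZ K c X : Rbar K (c *: X) = c *: Rbar K X.
Proof.
apply/matrixP => i j; rewrite !mxE mulr_sumr; apply: eq_bigr => k _.
by rewrite mulr_sumr; apply: eq_bigr => l _; rewrite mxE mulrCA.
Qed.

Lemma Rbar_sum K (I : finType) (F : I -> 'M[R]_4) :
  Rbar K (\sum_a F a) = \sum_a Rbar K (F a).
Proof.
apply/matrixP => i j; rewrite summxE !mxE.
transitivity (\sum_k \sum_l \sum_a K i k l j * F a k l).
  by apply: eq_bigr => k _; apply: eq_bigr => l _; rewrite summxE mulr_sumr.
under eq_bigr => k _ do rewrite exchange_big.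
by rewrite exchange_big; apply: eq_bigr => a _; rewrite mxE.
Qed.

Definition curv_form K X Y := mdot X (Rbar K Y).

Lemma curv_formDl K X1 X2 Y : curv_form K (X1 + X2) Y = curv_form K X1 Y + curv_form K X2 Y.
Proof. exact: mdotDl. Qed.

Lemma curv_formDr K X Y1 Y2 : curv_form K X (Y1 + Y2) = curv_form K X Y1 + curv_form K X Y2.
Proof. by rewrite /curv_form RbarD mdotDr. Qed.

Lemma curv_formZl K c X Y : curv_form K (c *: X) Y = c * curv_form K X Y.
Proof. exact: mdotZl. Qed.

Lemma curv_formZr K c X Y : curv_form K X (c *: Y) = c * curv_form K X Y.
Proof. by rewrite /curv_form RbarZ mdotZr. Qed.

Lemma curv_form_suml K (I : finType) (F : I -> 'M[R]_4) Y :
  curv_form K (\sum_a F a) Y = \sum_a curv_form K (F a) Y.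
Proof. exact: mdot_suml. Qed.

Lemma curv_form_sumr K (I : finType) (F : I -> 'M[R]_4) X :
  curv_form K X (\sum_a F a) = \sum_a curv_form K X (F a).
Proof. by rewrite /curv_form Rbar_sum mdot_sumr. Qed.

Lemma curv_form_delta K p q r s : curv_form K (delta_mx p q) (delta_mx r s) = K p r s q.
Proof.
rewrite /curv_form /mdot -[RHS](sum_delta_mx (fun i j => K i r s j)) /=.
apply: eq_bigr => i _; apply: eq_bigr => j _; rewrite !mxE; congr (_ * _).
by rewrite -(sum_delta_mx (fun k l => K i k l j)); do 2!apply: eq_bigr => ? _; rewrite mulrC.
Qed.

Lemma curv_form_expand K X Y : curv_form K X Y =
  \sum_(u : 'I_4 * 'I_4) \sum_(v : 'I_4 * 'I_4) X u.1 u.2 * Y v.1 v.2 * K u.1 v.1 v.2 u.2.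
Proof.
rewrite {1}[X]matrix_sum_delta {1}[Y]matrix_sum_delta.
rewrite (pair_big xpredT xpredT (fun i j => X i j *: delta_mx i j)).
rewrite (pair_big xpredT xpredT (fun i j => Y i j *: delta_mx i j)) curv_form_suml.
apply: eq_bigr => u _; rewrite curv_form_sumr; apply: eq_bigr => v _.
by rewrite curv_formZl curv_formZr curv_form_delta mulrA.
Qed.

End CurvatureForm.

Section SymmetricUnits.
Variable R : realType.
Implicit Types (p q r s : 'I_4) (U V : 'M[R]_4) (K : tensor4 R).

Definition sym_unit p q : 'M[R]_4 := delta_mx p q + delta_mx q p.
Definition diag_unit p q : 'M[R]_4 := delta_mx p p + delta_mx q q.

Definition half_comb (U V : 'M[R]_4) (eps : R) := 2^-1 *: (U + eps *: V).

Lemma curv_form_half_comb K U V eps : curv_form K (half_comb U V eps) (half_comb U V eps) =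
  4^-1 * (curv_form K U U + eps * (curv_form K U V + curv_form K V U) + eps ^+ 2 * curv_form K V V).
Proof. by rewrite /half_comb !(curv_formZl, curv_formZr, curv_formDl, curv_formDr); field. Qed.

Lemma mdot_half_comb U V eps U' V' eps' : mdot (half_comb U V eps) (half_comb U' V' eps') =
  4^-1 * (mdot U U' + eps' * mdot U V' + eps * mdot V U' + eps * eps' * mdot V V').
Proof. by rewrite /half_comb !(mdotZl, mdotZr, mdotDl, mdotDr); field. Qed.

End SymmetricUnits.

Arguments sym_unit {R}.
Arguments diag_unit {R}.

Section AlgebraicCurvature.
Variables (R : realType) (K : tensor4 R).
Hypothesis hK : is_alg_curv K.
Implicit Types (X Y : 'M[R]_4) (p q r s : 'I_4).

Lemma alg_curv_eq0 a c d : K a a c d = 0.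
Proof. by case: hK => antiK _ _ _; have := antiK a a c d; lra. Qed.

Lemma alg_curv_swap a b c d : K a b c d = K b a d c.
Proof. by case: hK => antiK antiK' _ _; rewrite antiK antiK' opprK. Qed.

Lemma curv_formC X Y : curv_form K X Y = curv_form K Y X.
Proof.
rewrite !curv_form_expand exchange_big; apply: eq_bigr => u _; apply: eq_bigr => v _.
by rewrite (alg_curv_swap v.1); ring.
Qed.

Lemma curv_form_sym_unit p q r s :
  curv_form K (sym_unit p q) (sym_unit r s) = 2 * (K p r s q + K p s r q).
Proof.
case: hK => _ _ pairK _.
rewrite /sym_unit !(curv_formDl, curv_formDr) !curv_form_delta.
rewrite (alg_curv_swap q r s p) (pairK r q p s) (alg_curv_swap q s r p) (pairK s q p r); ring.
Qed.

Lemma curv_form_diag_unit p q r s :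
  curv_form K (diag_unit p q) (diag_unit r s) = - (K p r p r + K p s p s + K q r q r + K q s q s).
Proof.
case: hK => _ antiK _ _.
rewrite /diag_unit !(curv_formDl, curv_formDr) !curv_form_delta.
by rewrite (antiK p r r p) (antiK p s s p) (antiK q r r q) (antiK q s s q); ring.
Qed.

Lemma curv_form_sym_comb p q r s (eps : R) :
  let X := half_comb (sym_unit p q) (sym_unit r s) eps in
  curv_form K X X = 2^-1 * (K p q p q + eps ^+ 2 * K r s r s) + eps * (K p r s q + K p s r q).
Proof.
case: hK => _ _ pairK _.
rewrite /= curv_form_half_comb !curv_form_sym_unit !alg_curv_eq0.
by rewrite (alg_curv_swap r p q s) (pairK r q p s); field.
Qed.

Lemma curv_form_diag_comb p q r s :
  let X := half_comb (diag_unit p q) (diag_unit r s) (-1) in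
  curv_form K X X = 2^-1 * (K p r p r + K p s p s + K q r q r + K q s q s - K p q p q - K r s r s).
Proof.
rewrite /= curv_form_half_comb !curv_form_diag_unit !alg_curv_eq0.
rewrite (alg_curv_swap q p q p) (alg_curv_swap s r s r) (alg_curv_swap r p r p).
by rewrite (alg_curv_swap r q r q) (alg_curv_swap s p s p) (alg_curv_swap s q s q); field.
Qed.

End AlgebraicCurvature.

Section Frames.
Variable R : realType.
Implicit Types (Rm : tensor4 R) (e : 'I_4 -> 'I_4 -> R).

Local Notation sum4 F := (\sum_a \sum_b \sum_c \sum_d (F a b c d : R)).

Lemma eq_sum4 (F G : 'I_4 -> 'I_4 -> 'I_4 -> 'I_4 -> R) :
  (forall a b c d, F a b c d = G a b c d) -> sum4 F = sum4 G.
Proof. by move=> FG; do 4!apply: eq_bigr => ? _. Qed.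

Lemma sum4N (F : 'I_4 -> 'I_4 -> 'I_4 -> 'I_4 -> R) :
  - sum4 F = sum4 (fun a b c d => - F a b c d).
Proof. by rewrite -sumrN; do 3!(apply: eq_bigr => ? _; rewrite -sumrN). Qed.

Definition frame_tensor Rm e : tensor4 R := fun a b c d => Reval Rm (e a) (e b) (e c) (e d).

Lemma is_alg_curv_frame_tensor Rm e : is_alg_curv Rm -> is_alg_curv (frame_tensor Rm e).
Proof.
case=> antiK antiK' pairK bianchiK; rewrite /frame_tensor /Reval; split=> a b c d.
- rewrite sum4N [in RHS]exchange_big; apply: eq_sum4 => i j k l.
  by rewrite antiK; ring.
- rewrite sum4N; under [in RHS]eq_bigr do under eq_bigr do rewrite exchange_big.
  apply: eq_sum4 => i j k l.
  by rewrite antiK'; ring.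
- under [in RHS]eq_bigr do rewrite exchange_big.
  rewrite [in RHS]exchange_big.
  under [in RHS]eq_bigr do under eq_bigr do rewrite exchange_big.
  under [in RHS]eq_bigr do rewrite exchange_big.
  by apply: eq_sum4 => i j k l; rewrite pairK; ring.
- under [X in _ + X + _]eq_bigr do rewrite exchange_big.
  rewrite [X in _ + X + _]exchange_big [X in _ + _ + X]exchange_big.
  under [X in _ + _ + X]eq_bigr do rewrite exchange_big.
  rewrite -!big_split big1 // => i _; rewrite -!big_split big1 // => j _.
  rewrite -!big_split big1 // => k _; rewrite -!big_split big1 // => l _.
  rewrite /= -[RHS](mul0r (e a i * e b j * e c k * e d l)) -(bianchiK i j k l); ring.
Qed.

Definition frame_mx e : 'M[R]_4 := \matrix_(i, j) e i j.

Lemma frame_mx_orthogonal e : orthonormal_frame e -> frame_mx e *m (frame_mx e)^T = 1%:M.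
Proof.
move=> eON; apply/matrixP => i j; rewrite !mxE -eON.
by apply: eq_bigr => k _; rewrite !mxE.
Qed.

Lemma frame_conjE e X : (frame_mx e)^T *m X *m frame_mx e =
  \sum_p \sum_q X p q *: \matrix_(i, j) (e p i * e q j).
Proof.
apply/matrixP => i j; rewrite !mxE summxE.
transitivity (\sum_k \sum_p e p i * X p k * e k j).
  by apply: eq_bigr => k _; rewrite !mxE mulr_suml; apply: eq_bigr => p _; rewrite !mxE.
rewrite exchange_big; apply: eq_bigr => p _; rewrite summxE.
by apply: eq_bigr => q _; rewrite !mxE; ring.
Qed.

Lemma curv_form_frame_units Rm e p q r s :
  curv_form Rm (\matrix_(i, j) (e p i * e q j)) (\matrix_(i, j) (e r i * e s j)) =
  Reval Rm (e p) (e r) (e s) (e q).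
Proof.
rewrite /curv_form /mdot /Reval; apply: eq_bigr => i _.
transitivity (\sum_j \sum_k \sum_l Rm i k l j * e p i * e r k * e s l * e q j).
  apply: eq_bigr => j _; rewrite !mxE mulr_sumr; apply: eq_bigr => k _.
  by rewrite mulr_sumr; apply: eq_bigr => l _; rewrite !mxE; ring.
by rewrite exchange_big; apply: eq_bigr => k _; rewrite exchange_big.
Qed.

Lemma curv_form_frame Rm e X Y :
  curv_form Rm ((frame_mx e)^T *m X *m frame_mx e) ((frame_mx e)^T *m Y *m frame_mx e) =
  curv_form (frame_tensor Rm e) X Y.
Proof.
rewrite !frame_conjE curv_form_suml; apply: eq_bigr => p _.
rewrite curv_form_suml; apply: eq_bigr => q _.
rewrite curv_formZl curv_form_sumr mxE; congr (_ * _); apply: eq_bigr => r _.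
rewrite curv_form_sumr; apply: eq_bigr => s _.
by rewrite curv_formZr curv_form_frame_units mulrC.
Qed.

End Frames.

Section AdaptedBasis.
Variable R : realType.

Local Notation i0 := (@Ordinal 4 0 isT).
Local Notation i1 := (@Ordinal 4 1 isT).
Local Notation i2 := (@Ordinal 4 2 isT).
Local Notation i3 := (@Ordinal 4 3 isT).

Lemma sum4E (F : 'I_4 -> R) : \sum_i F i = F i0 + F i1 + F i2 + F i3.
Proof.
rewrite !big_ord_recl big_ord0 addr0 !addrA.
by congr (_ + _ + _ + _); congr F; apply: val_inj.
Qed.

Lemma sum9E (F : 'I_9 -> R) : \sum_i F i =
  F (@Ordinal 9 0 isT) + F (@Ordinal 9 1 isT) + F (@Ordinal 9 2 isT) +
  F (@Ordinal 9 3 isT) + F (@Ordinal 9 4 isT) + F (@Ordinal 9 5 isT) +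
  F (@Ordinal 9 6 isT) + F (@Ordinal 9 7 isT) + F (@Ordinal 9 8 isT).
Proof.
rewrite !big_ord_recl big_ord0 addr0 !addrA.
by congr (_ + _ + _ + _ + _ + _ + _ + _ + _); congr F; apply: val_inj.
Qed.

Lemma ord4_ind (P : 'I_4 -> Prop) : P i0 -> P i1 -> P i2 -> P i3 -> forall k, P k.
Proof.
move=> P0 P1 P2 P3 [[|[|[|[|//]]]] lt_k]; rewrite (bool_irrelevance lt_k isT) //.
Qed.

(* The basis phi_1, ..., phi_9 of the header, indexed from 0, with e_1, ..., e_4
   the standard basis i0, ..., i3. *)
Definition adapted_basis (k : 'I_9) : 'M[R]_4 :=
  match val k with
  | 0 => half_comb (sym_unit i0 i2) (sym_unit i1 i3) 1
  | 1 => half_comb (sym_unit i0 i2) (sym_unit i1 i3) (-1)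
  | 2 => half_comb (sym_unit i0 i3) (sym_unit i1 i2) 1
  | 3 => half_comb (sym_unit i0 i3) (sym_unit i1 i2) (-1)
  | 4 => half_comb (sym_unit i0 i1) (sym_unit i2 i3) 1
  | 5 => half_comb (sym_unit i0 i1) (sym_unit i2 i3) (-1)
  | 6 => half_comb (diag_unit i0 i1) (diag_unit i2 i3) (-1)
  | 7 => half_comb (diag_unit i0 i2) (diag_unit i1 i3) (-1)
  | _ => half_comb (diag_unit i0 i3) (diag_unit i1 i2) (-1)
  end.

Local Ltac case9 k :=
  case: k => [[|[|[|[|[|[|[|[|[|//]]]]]]]]] ?].

Lemma adapted_basis_sym k : (adapted_basis k)^T = adapted_basis k.
Proof.
have half_combT U V (eps : R) : U^T = U -> V^T = V -> (half_comb U V eps)^T = half_comb U V eps.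
  by move=> UT VT; rewrite /half_comb linearZ /= linearD /= linearZ /= UT VT.
have sym_unitT p q : (sym_unit p q)^T = sym_unit p q :> 'M[R]_4.
  by rewrite linearD /= !trmx_delta addrC.
have diag_unitT p q : (diag_unit p q)^T = diag_unit p q :> 'M[R]_4.
  by rewrite linearD /= !trmx_delta.
by rewrite /adapted_basis; case9 k; apply: half_combT.
Qed.

Lemma adapted_basis_traceless k : \tr (adapted_basis k) = 0.
Proof.
have tr_delta p q : \tr (delta_mx p q : 'M[R]_4) = (p == q)%:R.
  by rewrite -mdot1r mdot_deltal mxE.
rewrite /adapted_basis /half_comb /sym_unit /diag_unit; case9 k;
by rewrite /= !(mxtraceZ, mxtraceD, raddfN) /= ?mxtraceD !tr_delta /=; lra.
Qed.

Lemma mdot_delta a b c d :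
  mdot (delta_mx a b) (delta_mx c d) = ((a == c) && (b == d))%:R :> R.
Proof. by rewrite mdot_deltal mxE. Qed.

Lemma mdot_sym_unit a b c d : mdot (sym_unit a b) (sym_unit c d) =
  ((a == c) && (b == d))%:R + ((a == d) && (b == c))%:R +
  ((b == c) && (a == d))%:R + ((b == d) && (a == c))%:R :> R.
Proof. by rewrite /sym_unit !(mdotDl, mdotDr) !mdot_delta !addrA. Qed.

Lemma mdot_sym_diag_unit a b c d : mdot (sym_unit a b) (diag_unit c d) =
  ((a == c) && (b == c))%:R + ((a == d) && (b == d))%:R +
  ((b == c) && (a == c))%:R + ((b == d) && (a == d))%:R :> R.
Proof. by rewrite /sym_unit /diag_unit !(mdotDl, mdotDr) !mdot_delta !addrA. Qed.

Lemma mdot_diag_unit a b c d : mdot (diag_unit a b) (diag_unit c d) =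
  (a == c)%:R + (a == d)%:R + (b == c)%:R + (b == d)%:R :> R.
Proof. by rewrite /diag_unit !(mdotDl, mdotDr) !mdot_delta !andbb !addrA. Qed.

Lemma mdot_diag_sym_unit a b c d : mdot (diag_unit a b) (sym_unit c d) =
  ((c == a) && (d == a))%:R + ((c == b) && (d == b))%:R +
  ((d == a) && (c == a))%:R + ((d == b) && (c == b))%:R :> R.
Proof. by rewrite mdotC mdot_sym_diag_unit. Qed.

Lemma adapted_basis_orthonormal k l : mdot (adapted_basis k) (adapted_basis l) = (k == l)%:R.
Proof.
rewrite /adapted_basis; case9 k; case9 l;
rewrite /= mdot_half_comb;
rewrite ?mdot_sym_unit ?mdot_sym_diag_unit ?mdot_diag_sym_unit ?mdot_diag_unit /=; lra.
Qed.

Lemma adapted_basis_complete (Y : 'M[R]_4) : Y^T = Y -> \tr Y = 0 ->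
  Y = \sum_k mdot (adapted_basis k) Y *: adapted_basis k.
Proof.
move=> YT; rewrite /mxtrace sum4E => Ytr.
have Ysym i j : Y j i = Y i j by rewrite -{1}YT mxE.
have := (Ysym i0 i1, Ysym i0 i2, Ysym i0 i3, Ysym i1 i2, Ysym i1 i3, Ysym i2 i3).
move=> [[[[[Y01 Y02] Y03] Y12] Y13] Y23].
apply/matrixP => i j; rewrite summxE sum9E /adapted_basis /= /half_comb /sym_unit /diag_unit.
rewrite !(mdotDl, mdotZl, mdotNl) !mdot_deltal !mxE.
by elim/ord4_ind: i; elim/ord4_ind: j; rewrite /=; lra.
Qed.

Definition iso_index (k : 'I_9) : bool := val k \in [:: 0; 3; 6]%N.

Lemma sum_iso_index (F : 'I_9 -> R) :
  \sum_(k | iso_index k) F k = F (@Ordinal 9 0 isT) + F (@Ordinal 9 3 isT) + F (@Ordinal 9 6 isT).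
Proof. by rewrite big_mkcond sum9E /= !addr0. Qed.

Lemma sum_iso_weights (x y : R) (F : 'I_9 -> R) :
  \sum_k (if iso_index k then x else y) * F k =
  x * \sum_(k | iso_index k) F k + y * (\sum_k F k - \sum_(k | iso_index k) F k).
Proof. by rewrite sum_iso_index !sum9E /=; ring. Qed.

Lemma adapted_basis_identity (K : tensor4 R) : is_alg_curv K ->
  let Q k := curv_form K (adapted_basis k) (adapted_basis k) in
  3 * \sum_(k | iso_index k) Q k + \sum_k Q k =
  9 / 2 * (K i0 i2 i0 i2 + K i0 i3 i0 i3 + K i1 i2 i1 i2 + K i1 i3 i1 i3 - 2 * K i0 i1 i2 i3).
Proof.
move=> K_curv Q; case: (K_curv) => antiK antiK' pairK bianchiK.
rewrite sum_iso_index !sum9E /Q /adapted_basis /=.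
rewrite !curv_form_sym_comb // !curv_form_diag_comb //.
(* These collapse the mixed terms to - 3 K i0 i1 i2 i3. *)
have := bianchiK i0 i1 i2 i3; have := pairK i1 i2 i0 i3.
have := antiK i2 i0 i1 i3; have := antiK' i0 i1 i3 i2.
rewrite (alg_curv_swap K_curv i2 i1) (alg_curv_swap K_curv i3 i1) (alg_curv_swap K_curv i3 i2).
lra.
Qed.

End AdaptedBasis.

Lemma mdot_conj (R : realType) (E X Y : 'M[R]_4) : E *m E^T = 1%:M ->
  mdot (E^T *m X *m E) (E^T *m Y *m E) = mdot X Y.
Proof.
move=> EET; rewrite !mdotE !trmx_mul trmxK !mulmxA.
rewrite -[E^T *m X *m E *m E^T]mulmxA EET mulmx1.
by rewrite mxtrace_mulC !mulmxA EET mul1mx.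
Qed.

Section FrameBasis.
Variables (R : realType) (e : 'I_4 -> 'I_4 -> R).
Hypothesis eON : orthonormal_frame e.
Local Notation E := (frame_mx e).

Definition frame_basis (k : 'I_9) : 'M[R]_4 := E^T *m adapted_basis R k *m E.

Lemma frame_basis_orthonormal k l : mdot (frame_basis k) (frame_basis l) = (k == l)%:R.
Proof. by rewrite mdot_conj ?frame_mx_orthogonal ?adapted_basis_orthonormal. Qed.

Lemma frame_basis_sym k : (frame_basis k)^T = frame_basis k.
Proof. by rewrite !trmx_mul trmxK adapted_basis_sym mulmxA. Qed.

Lemma frame_basis_traceless k : \tr (frame_basis k) = 0.
Proof.
rewrite mxtrace_mulC mulmxA (frame_mx_orthogonal eON) mul1mx.
exact: adapted_basis_traceless.
Qed.

Lemma frame_basis_complete X : X^T = X -> \tr X = 0 ->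
  X = \sum_k mdot (frame_basis k) X *: frame_basis k.
Proof.
move=> XT Xtr; have EET := frame_mx_orthogonal eON; have ETE := mulmx1C EET.
set Y := E *m X *m E^T.
have XE : X = E^T *m Y *m E by rewrite /Y !mulmxA ETE mul1mx -mulmxA ETE mulmx1.
have YT : Y^T = Y by rewrite /Y !trmx_mul trmxK XT mulmxA.
have Ytr : \tr Y = 0 by rewrite /Y mxtrace_mulC mulmxA ETE mul1mx.
rewrite {1}XE (adapted_basis_complete YT Ytr) mulmx_sumr mulmx_suml.
apply: eq_bigr => k _; rewrite -scalemxAr -scalemxAl; congr (_ *: _).
by rewrite XE mdot_conj.
Qed.

End FrameBasis.

Section CurvatureOperator.
Variables (R : realType) (Rm : tensor4 R) (b : 'I_9 -> 'M[R]_4).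
Hypotheses (Rm_curv : is_alg_curv Rm) (b_onb : is_onb_S20 b).

Lemma curv2_mxE a c : curv2_mx Rm b a c = curv_form Rm (b a) (b c).
Proof.
case: b_onb => _ b_tr _.
rewrite mxE /proj0 mdotDr -scaleN1r !mdotZr mdot1r b_tr.
by rewrite !mulr0 addr0.
Qed.

Lemma curv2_mx_sym : (curv2_mx Rm b)^T = curv2_mx Rm b.
Proof. by apply/matrixP => a c; rewrite mxE !curv2_mxE curv_formC. Qed.

Variables (e : 'I_4 -> 'I_4 -> R).
Hypothesis eON : orthonormal_frame e.

Definition basis_change : 'M[R]_9 := \matrix_(k, a) mdot (frame_basis e k) (b a).
Local Notation M := basis_change.

Lemma basis_change_orthogonal : M *m M^T = 1%:M.
Proof.
case: b_onb => b_sym b_tr b_on; apply: mulmx1C; apply/matrixP => a c.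
rewrite !mxE -b_on [in RHS](frame_basis_complete eON (b_sym a) (b_tr a)) mdot_suml.
by apply: eq_bigr => k _; rewrite !mxE mdotZl.
Qed.

Lemma frame_basis_expand k : frame_basis e k = \sum_a M k a *: b a.
Proof.
case: b_onb => b_sym b_tr b_on.
set X := frame_basis e k - \sum_a M k a *: b a.
have XT : X^T = X.
  rewrite /X linearB /= frame_basis_sym raddf_sum; congr (_ - _).
  by apply: eq_bigr => a _; rewrite /= linearZ /= b_sym.
have Xtr : \tr X = 0.
  rewrite /X -mdot1r mdotDl mdotNl mdot_suml mdot1r (frame_basis_traceless eON).
  by rewrite big1 ?subrr // => a _; rewrite mdotZl mdot1r b_tr mulr0.
have X_orth l : mdot (frame_basis e l) X = 0.
  rewrite /X mdotDr mdotNr mdot_sumr (frame_basis_orthonormal eON).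
  have := congr1 (fun A : 'M_9 => A l k) basis_change_orthogonal; rewrite !mxE => <-.
  apply/eqP; rewrite subr_eq0; apply/eqP; apply: eq_bigr => a _.
  by rewrite mdotZr !mxE mulrC.
apply/subr0_eq; rewrite -/X.
by rewrite (frame_basis_complete eON XT Xtr) big1 // => l _; rewrite X_orth scale0r.
Qed.

Lemma curv2_mx_conj_diag k :
  (M *m curv2_mx Rm b *m M^T) k k = curv_form Rm (frame_basis e k) (frame_basis e k).
Proof.
rewrite (frame_basis_expand k) curv_form_suml mxE.
under eq_bigr do rewrite !mxE mulr_suml.
rewrite exchange_big; apply: eq_bigr => a _.
rewrite curv_formZl curv_form_sumr mulr_sumr; apply: eq_bigr => c _.
by rewrite curv_formZr curv2_mxE !mxE; ring.
Qed.

End CurvatureOperator.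

Definition cone_admissible (R : realType) (al th : R) : Prop :=
  ((1 <= al <= 3) /\ th = 1) \/ ((3 <= al < 9) /\ th = 9 / al - 2).

Section IsotropicCurvatureBound.
Variables (R : realType) (Rm : tensor4 R) (b : 'I_9 -> 'M[R]_4) (e : 'I_4 -> 'I_4 -> R).
Hypotheses (Rm_curv : is_alg_curv Rm) (b_onb : is_onb_S20 b) (eON : orthonormal_frame e).

Local Notation q k := (curv_form Rm (frame_basis e k) (frame_basis e k)).
Local Notation T := (\sum_(k | iso_index k) q k).
Local Notation S := (\sum_k q k).
Local Notation M := (basis_change b e).

Lemma frame_basis_identity : 3 * T + S = 9 / 2 * iso_curv Rm e.
Proof.
have frameE k : q k = curv_form (frame_tensor Rm e) (adapted_basis R k) (adapted_basis R k).
  exact: curv_form_frame.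
under eq_bigr do rewrite frameE; under [in X in _ + X]eq_bigr do rewrite frameE.
rewrite (adapted_basis_identity (is_alg_curv_frame_tensor e Rm_curv)) /iso_curv /=.
have inordE n (n_lt4 : (n < 4)%N) : inord n = Ordinal n_lt4 by apply: val_inj; rewrite /= inordK.
by rewrite (inordE 0 isT) (inordE 1 isT) (inordE 2 isT) (inordE 3 isT).
Qed.

Lemma frame_weighted_bound (delta al th x y : R) :
  in_cone (curv2_mx Rm b - delta%:M) al th -> 0 < al < 9 ->
  0 <= x <= 1 -> 0 <= y <= 1 -> 3 * x + 6 * y = al ->
  - (al * th / 9) * (S - 9 * delta) <=
  x * (T - 3 * delta) + y * (S - 9 * delta - (T - 3 * delta)).
Proof.
move=> cone al_range x01 y01 sw; set A := curv2_mx Rm b - delta%:M.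
have AT : A^T = A by rewrite /A linearB /= curv2_mx_sym // tr_scalar_mx.
have MMT := basis_change_orthogonal b_onb eON.
have diagA k : (M *m A *m M^T) k k = q k - delta.
  rewrite /A mulmxBr mulmxBl mul_mx_scalar -scalemxAl MMT mxE.
  by rewrite curv2_mx_conj_diag // !mxE eqxx mulr1n mulr1.
have sum_q_delta : \sum_k (q k - delta) = S - 9 * delta.
  by rewrite sumrB sumr_const card_ord mulr_natl.
have sum_iso_q_delta : \sum_(k | iso_index k) (q k - delta) = T - 3 * delta.
  have sum_delta : \sum_(k | iso_index k) delta = 3 * delta by rewrite sum_iso_index; ring.
  by rewrite sumrB sum_delta.
rewrite -sum_q_delta -sum_iso_q_delta -sum_iso_weights.
under eq_bigr do rewrite -diagA; under [in X in _ <= X]eq_bigr do rewrite -diagA.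
apply: in_cone_diag_bound => //.
- by move=> k; case: ifP.
- by rewrite sum9E /=; lra.
Qed.

Lemma iso_curv_lower_bound (delta al th : R) :
  in_cone (curv2_mx Rm b - delta%:M) al th -> cone_admissible al th ->
  4 * delta <= iso_curv Rm e.
Proof.
move=> cone adm; have identity := frame_basis_identity.
have al_identity := congr1 (fun t => al * t) identity.
have al_range : 0 < al < 9 by case: adm => -[/andP[? ?] _]; apply/andP; split; lra.
have al0 : 0 < al by case/andP: al_range.
have bound := frame_weighted_bound cone al_range.
case: adm => [[/andP[_ al3] thE]|[/andP[al3 al9] thE]].
- have x01 : 0 <= al / 3 <= 1 by apply/andP; split; lra.
  have y01 : 0 <= (0 : R) <= 1 by rewrite lexx ler01.
  have sw : 3 * (al / 3) + 6 * 0 = al by lra.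
  move: (bound _ _ x01 y01 sw); rewrite thE => {}bound.
  have : al * (4 * delta - iso_curv Rm e) <= 0 by lra.
  by rewrite pmulr_rle0 ?subr_le0.
- have x01 : 0 <= (1 : R) <= 1 by rewrite ler01 lexx.
  have y01 : 0 <= (al - 3) / 6 <= 1 by apply/andP; split; lra.
  have sw : 3 * 1 + 6 * ((al - 3) / 6) = al by lra.
  have th_al : al * th / 9 = 1 - 2 * al / 9 by rewrite thE; field; rewrite gt_eqF.
  move: (bound _ _ x01 y01 sw); rewrite th_al => {}bound.
  have : (9 - al) * (4 * delta - iso_curv Rm e) <= 0 by lra.
  by rewrite pmulr_rle0 ?subr_le0 // subr_gt0.
Qed.

End IsotropicCurvatureBound.

Section Conclusion.
Variables (R : realType) (Rm : tensor4 R) (b : 'I_9 -> 'M[R]_4) (al th : R).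
Hypotheses (Rm_curv : is_alg_curv Rm) (b_onb : is_onb_S20 b) (adm : cone_admissible al th).

Lemma nonneg_iso_curv_of_cone : in_cone (curv2_mx Rm b) al th -> nonneg_iso_curv Rm.
Proof.
move=> cone e eON; rewrite -(mulr0 4).
by apply: (iso_curv_lower_bound Rm_curv b_onb eON _ adm); rewrite raddf0 subr0.
Qed.

Lemma pos_iso_curv_of_cone_interior :
  in_cone_interior (curv2_mx Rm b) al th -> pos_iso_curv Rm.
Proof.
move=> [eps eps0 near_cone] e eON; set delta := eps / 2.
have delta0 : 0 < delta by rewrite divr_gt0.
have B_sym : (curv2_mx Rm b - delta%:M)^T = curv2_mx Rm b - delta%:M.
  by rewrite linearB /= curv2_mx_sym // tr_scalar_mx.
have B_near a c : `|(curv2_mx Rm b - delta%:M) a c - curv2_mx Rm b a c| < eps.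
  rewrite !mxE; case: (a == c) => /=.
  + by rewrite mulr1n addrAC subrr add0r normrN gtr0_norm // /delta; lra.
  + by rewrite mulr0n subr0 subrr normr0.
have := iso_curv_lower_bound Rm_curv b_onb eON (near_cone _ B_sym B_near) adm.
lra.
Qed.

End Conclusion.

Theorem proposition4p2 (R : realType) (Rm : tensor4 R) (b : 'I_9 -> 'M[R]_4)
    (alpha : R) :
  is_alg_curv Rm -> is_onb_S20 b ->
  ((((1 <= alpha <= 3) /\ in_cone (curv2_mx Rm b) alpha 1)
    \/ ((3 <= alpha < 9) /\ in_cone (curv2_mx Rm b) alpha (9 / alpha - 2)))
   -> nonneg_iso_curv Rm)
  /\
  ((((1 <= alpha <= 3) /\ in_cone_interior (curv2_mx Rm b) alpha 1)
    \/ ((3 <= alpha < 9) /\ in_cone_interior (curv2_mx Rm b) alpha (9 / alpha - 2)))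
   -> pos_iso_curv Rm).
Proof.
move=> Rm_curv b_onb; split.
- case=> -[al_range cone]; apply: (nonneg_iso_curv_of_cone Rm_curv b_onb _ cone).
  + by left.
  + by right.
- case=> -[al_range cone]; apply: (pos_iso_curv_of_cone_interior Rm_curv b_onb _ cone).
  + by left.
  + by right.
Qed.
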